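(* Let $n$ be odd, let $\Gamma=\mathrm{Cay}(\mathrm{D}_{2n},S)$ be a Cayley digraph of the dihedral group $\mathrm{D}_{2n}$ of order $2n$, let $A=\mathrm{Aut}(\Gamma)$, and let $A_1$ be the stabilizer in $A$ of the vertex $1$ (the identity element). If $\gcd(|A_1|,n)=1$, then $\Gamma$ is a CI-digraph. Moreover, if $\Gamma$ is connected and $|S|<p$, where $p$ is the least prime divisor of $n$, then $\Gamma$ is a CI-digraph.
   Context: For a group $G$ and a subset $S\subseteq G$ with $1\notin S$, the Cayley digraph $\mathrm{Cay}(G,S)$ has vertex set $G$ and arc set $\{(g,sg)\mid g\in G,\ s\in S\}$; it is connected exactly when $\langle S\rangle=G$. $\mathrm{Cay}(G,S)$ is a CI-digraph if for every $T\subseteq G$ with $1\notin T$ and $\mathrm{Cay}(G,T)\cong\mathrm{Cay}(G,S)$ there is $\alpha\in\mathrm{Aut}(G)$ with $S^\alpha=T$. *)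

From mathcomp Require Import all_boot all_fingroup all_solvable.
Set Implicit Arguments. Unset Strict Implicit. Unset Printing Implicit Defensive.
Local Open Scope group_scope.

Section Cayley.
Variable gT : finGroupType.

(* Arc relation of Cay(G,S), G = [set: gT]: arcs are (g, s g) for s in S,
   i.e. (g, h) is an arc iff h * g^-1 \in S. *)
Definition cay_arc (S : {set gT}) : rel gT := fun g h => h * g^-1 \in S.

Definition cay_aut (S : {set gT}) : {set {perm gT}} :=
  [set f : {perm gT} | [forall g, forall h, cay_arc S (f g) (f h) == cay_arc S g h]].

Definition cay_stab (S : {set gT}) : {set {perm gT}} :=
  [set f in cay_aut S | f 1 == 1].

Definition cay_iso (S T : {set gT}) : Prop :=
  exists f : {perm gT}, forall g h, cay_arc T (f g) (f h) = cay_arc S g h.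

Definition CI_digraph (S : {set gT}) : Prop :=
  forall T : {set gT}, 1 \notin T -> cay_iso S T ->
    exists2 a : {perm gT}, a \in Aut [set: gT] & a @: S = T.

Definition cay_connected (S : {set gT}) : Prop := <<S>> = [set: gT].
End Cayley.

From mathcomp Require Import all_boot all_fingroup all_solvable.
Set Implicit Arguments. Unset Strict Implicit. Unset Printing Implicit Defensive.
Local Open Scope group_scope.

(* By Babai's criterion, Cay(G,S) is a CI-digraph as soon as every conjugate
   of the right regular representation R(G) lying in A = Aut Cay(G,S) is
   conjugate to R(G) inside A.  Write D_2n = C <*> y with C the rotations.
   Since |A| = 2n|A_1| and n is odd, gcd(|A_1|, n) = 1 makes R(C) an abelian
   Hall subgroup of A; abelian (indeed nilpotent) Hall subgroups are
   conjugate (Wielandt), so a conjugate R(G)^g in A may be assumed to satisfy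
   R(C)^g = R(C).  For a vertex v outside C, the element t of R(G)^g with
   t 1 = v and the translation R(v) both invert R(C), so t R(v)^-1 lies in
   A_1 and centralises R(C); it then acts on each coset of C as a translation
   by an element of C, so its order divides both n and |A_1|, and t = R(v).
   For the second claim, an element of prime order q > |S| of A_1 permutes
   the out-neighbours S v of any vertex v it fixes with orbits of size 1 or
   q, so it fixes them all, hence fixes <S> = G pointwise. *)

Section NilpotentHall.
Variable gT : finGroupType.
Implicit Types (pi : nat_pred) (G H K : {group gT}).

Lemma Hall_sub_normal_pcores pi G H K :
    nilpotent H -> pi.-Hall(G) H -> pi.-Hall(G) K ->
    (forall p, p \in pi -> p \in \pi(G) -> 'O_p(H) <| G) -> H \subset K.
Proof.
move=> nilH hallH hallK nOG; have [sHG piH _] := and3P hallH.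
apply/subsetP=> y Hy; rewrite -(prod_constt y) big_nat group_prod // => p _.
have [/andP[pi_p piGp] | not_pi_p] := boolP ((p \in pi) && (p \in \pi(G))); last first.
  rewrite (constt1P _) ?group1 //; apply: sub_p_elt (_ : [predI pi & \pi(G)].-elt y).
    by move=> q /andP[pi_q piGq]; apply: contraNneq not_pi_p => <-; apply/andP.
  rewrite /p_elt pnatI; apply/andP; split; first exact: mem_p_elt piH Hy.
  exact: mem_p_elt (pgroup_pi G) (subsetP sHG y Hy).
have [Q sylQ] := Sylow_exists p K.
have sylOH : p.-Sylow(H) 'O_p(H) := nilpotent_pcore_Hall p nilH.
have OHy : y.`_p \in 'O_p(H).
  by rewrite (mem_normal_Hall sylOH (pcore_normal _ _)) ?groupX ?p_elt_constt.
have sOHQ : 'O_p(H) \subset Q.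
  apply: subset_trans (pcore_sub_Hall (subHall_Sylow hallK pi_p sylQ)).
  exact: pcore_max (pcore_pgroup _ _) (nOG p pi_p piGp).
exact: subsetP (pHall_sub sylQ) _ (subsetP sOHQ _ OHy).
Qed.

(* Induction on |G|: if some O_p(H) is not normal in G, conjugate K so that
   O_p(K) = O_p(H) and work in the proper subgroup 'N_G('O_p(H)). *)
Theorem nilpotent_Hall_trans pi G H K :
    nilpotent H -> nilpotent K -> pi.-Hall(G) H -> pi.-Hall(G) K ->
  exists2 x, x \in G & K :=: H :^ x.
Proof.
elim: {G}_.+1 {-2}G (ltnSn #|G|) H K => // m IHm G leGm H K nilH nilK hallH hallK.
have [|/hasPn nOG] := boolP (has [pred p | (p \in pi) && ~~ ('O_p(H) <| G)] (primes #|G|)).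
  case/hasP=> p _ /andP[pi_p not_nOG].
  have sylOH := subHall_Sylow hallH pi_p (nilpotent_pcore_Hall p nilH).
  have sylOK := subHall_Sylow hallK pi_p (nilpotent_pcore_Hall p nilK).
  have [x Gx defOK] := Sylow_trans sylOH sylOK.
  pose N := 'N_G('O_p(H)).
  have sHN : H \subset N by rewrite subsetI (pHall_sub hallH) gFnorm.
  have sKxN : K :^ x^-1 \subset N.
    by rewrite subsetI !sub_conjgV (conjGid Gx) (pHall_sub hallK) -normJ -defOK gFnorm.
  have ltNG : #|N| < #|G|.
    rewrite proper_card // properEneq subsetIl andbT; apply: contraNneq not_nOG => defN.
    by rewrite /normal (subset_trans (pcore_sub _ _) (pHall_sub hallH)) -defN subsetIr.
  have hallHN : pi.-Hall(N) H by apply: pHall_subl hallH; rewrite ?subsetIl.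
  have hallKxN : pi.-Hall(N) (K :^ x^-1).
    by apply: pHall_subl (subsetIl _ _) _; rewrite ?pHallJ ?groupV.
  have nilKx : nilpotent (K :^ x^-1) by rewrite -(isog_nil (conj_isog K x^-1)).
  have [g /setIP[Gg _] defKx] := IHm _ (leq_trans ltNG leGm) _ _ nilH nilKx hallHN hallKxN.
  exists (g * x); first by rewrite groupM.
  by rewrite conjsgM -defKx conjsgKV.
exists 1; rewrite ?group1 // conjsg1; apply/esym/eqP.
rewrite eqEcard (card_Hall hallH) (card_Hall hallK) leqnn andbT.
apply: Hall_sub_normal_pcores nilH hallH hallK _ => p pi_p piGp.
by have := nOG p piGp; rewrite /= pi_p negbK.
Qed.

End NilpotentHall.

Section CayleyDigraph.
Variable gT : finGroupType.
Implicit Types (S T : {set gT}) (f k : {perm gT}).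

Local Notation rreg := (actperm (mulgr_action gT)).
Local Notation RG := (rreg @* [set: gT]).

Lemma rregE a x : rreg a x = x * a.
Proof. exact: actpermE. Qed.

Lemma rreg1E z : z \in RG -> z = rreg (z 1).
Proof. by case/morphimP=> a _ _ ->; rewrite rregE mul1g. Qed.

Lemma cay_arc1 S s : cay_arc S 1 s = (s \in S).
Proof. by rewrite /cay_arc invg1 mulg1. Qed.

Lemma cay_autP S f :
  reflect (forall g h, cay_arc S (f g) (f h) = cay_arc S g h) (f \in cay_aut S).
Proof.
rewrite inE; apply: (iffP forallP) => [autf g h | autf g].
  by apply/eqP; move/forallP: (autf g).
by apply/forallP=> h; rewrite autf.
Qed.

Lemma group_set_cay_aut S : group_set (cay_aut S).
Proof.
apply/group_setP; split=> [|f k /cay_autP autf /cay_autP autk].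
  by apply/cay_autP=> g h; rewrite !perm1.
by apply/cay_autP=> g h; rewrite !permM autk autf.
Qed.

Canonical cay_aut_group S := group (group_set_cay_aut S).

Lemma rreg_cay_aut S : RG \subset cay_aut S.
Proof.
apply/subsetP=> _ /morphimP[a _ _ ->]; apply/cay_autP=> g h.
by rewrite /cay_arc !rregE invMg mulgA mulgK.
Qed.

Lemma cay_stab_astab1 S : cay_stab S = 'C_(cay_aut S)[1 | 'P].
Proof. by apply/setP=> f; rewrite !inE /= sub1set inE apermE. Qed.

Lemma card_cay_aut S : #|cay_aut S| = (#|gT| * #|cay_stab S|)%N.
Proof.
have transA : orbit 'P (cay_aut S) 1 = [set: gT].
  apply/setP=> v; rewrite inE; apply/orbitP; exists (rreg v).
    by rewrite (subsetP (rreg_cay_aut S)) ?mem_morphim ?inE.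
  by rewrite /= apermE rregE mul1g.
by rewrite -(card_orbit_stab 'P (cay_aut_group S) 1) transA cardsT cay_stab_astab1.
Qed.

Lemma cent_rreg_expg_card (C : {group gT}) k :
  k \in 'C(rreg @* C) -> (forall u, u^-1 * k u \in C) -> k ^+ #|C| = 1.
Proof.
move=> cRCk kC; apply/permP=> u; rewrite perm1.
suff kX j : (k ^+ j) u = u * (u^-1 * k u) ^+ j by rewrite kX expg_cardG ?mulg1.
elim: j => [|j IHj]; first by rewrite perm1 mulg1.
have /permP/(_ u) := centP cRCk _ (mem_morphim _ (in_setT _) (groupX j (kC u))).
rewrite !permM !rregE => kR.
by rewrite expgSr permM IHj -kR expgS mulgA mulKVg.
Qed.

Section Isomorphism.
Variables (S T : {set gT}) (f : {perm gT}).
Hypothesis isoST : forall g h, cay_arc T (f g) (f h) = cay_arc S g h.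

Lemma cay_iso_autJ : cay_aut T :^ f^-1 \subset cay_aut S.
Proof.
apply/subsetP=> _ /imsetP[a /cay_autP autTa ->]; apply/cay_autP=> g h.
by rewrite /conjg invgK !permM -isoST !permKV autTa isoST.
Qed.

Lemma cay_iso_imset1 : f 1 = 1 -> f @: S = T.
Proof.
move=> f1; apply/setP=> w; rewrite -[w](permKV f) mem_imset; last exact: perm_inj.
by rewrite -!cay_arc1 -isoST f1 permKV.
Qed.

End Isomorphism.

Lemma norm_rreg_Aut f :
  f 1 = 1 -> f \in 'N(RG) -> f \in Aut [set: gT].
Proof.
move=> f1 /normP nRGf; have fM : {in [set: gT] &, {morph f : x y / x * y}}.
  move=> x y _ _; have : rreg y ^ f \in RG.
    by rewrite -nRGf memJ_conjg mem_morphim ?inE.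
  move/rreg1E/permP/(_ (f x)).
  by rewrite /conjg !permM permK !rregE -f1 permK mul1g.
by rewrite inE; apply/andP; split; [apply/subsetP=> ? _; rewrite inE | apply/morphicP].
Qed.

Lemma CI_digraph_norm_rreg S T f :
    f \in 'N(RG) ->
    (forall g h, cay_arc T (f g) (f h) = cay_arc S g h) ->
  exists2 a, a \in Aut [set: gT] & a @: S = T.
Proof.
move=> nRGf isoST; pose a := f * rreg (f 1)^-1.
have a1 : a 1 = 1 by rewrite permM rregE mulgV.
have nRGr : rreg (f 1)^-1 \in 'N(RG).
  by rewrite (subsetP (normG _)) ?mem_morphim ?inE.
exists a; first by rewrite norm_rreg_Aut ?groupM.
apply: cay_iso_imset1 a1 => g h.
by rewrite !permM (cay_autP _ _ (subsetP (rreg_cay_aut T) _ _)) ?mem_morphim ?inE.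
Qed.

Theorem Babai_CI_digraph S :
    (forall c, RG :^ c \subset cay_aut S ->
       exists2 b, b \in cay_aut S & RG :^ (c * b) = RG) ->
  CI_digraph S.
Proof.
move=> conjA T _ [f isoST].
have [b Ab nRG] : exists2 b, b \in cay_aut S & RG :^ (f^-1 * b) = RG.
  by apply: conjA; apply: subset_trans (cay_iso_autJ isoST); rewrite conjSg rreg_cay_aut.
apply: (CI_digraph_norm_rreg (f := b^-1 * f)).
  by apply/normP; rewrite -{1}nRG -conjsgM mulgA mulgK mulVg conjsg1.
by move=> g h; rewrite !permM isoST (cay_autP _ _ (groupVr Ab)).
Qed.

End CayleyDigraph.

Section GeneralizedDihedral.
Variables (gT : finGroupType) (C : {group gT}) (S : {set gT}).
Hypotheses (indexC : #|[set: gT] : C| = 2) (abelC : abelian C) (oddC : odd #|C|).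
Hypothesis invC : {in C & [set: gT] :\: C, forall c z, c ^ z = c^-1}.
Hypothesis coprime_stab : coprime #|cay_stab S| #|C|.

Local Notation rreg := (actperm (mulgr_action gT)).
Local Notation RG := (rreg @* [set: gT]).
Local Notation RC := (rreg @* C).
Local Notation A := (cay_aut_group S).

Lemma mulVg_notin u w : u \notin C -> w \notin C -> u^-1 * w \in C.
Proof.
move=> notCu notCw; have : w \in C :* u.
  by rewrite (rcoset_index2 (subsetT C) indexC) !inE ?notCu ?notCw.
by case/rcosetP=> c Cc ->; rewrite -conjgE invC ?groupV ?inE ?notCu.
Qed.

Lemma rreg_conj_notin w : w \notin C -> {in C, forall e, rreg e ^ rreg w = (rreg e)^-1}.
Proof. by move=> notCw e Ce; rewrite -morphJ ?invC ?morphV ?inE ?notCw. Qed.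

Lemma Hall_cay_aut (K : {group {perm gT}}) :
  K \subset A -> #|K| = #|C| -> \pi(#|C|).-Hall(A) K.
Proof.
move=> sKA oK; rewrite /pHall sKA /pgroup oK pnat_pi ?cardG_gt0 //= -divgS // oK.
rewrite card_cay_aut -cardsT -(Lagrange (subsetT C)) indexC -mulnA mulKn //.
rewrite -coprime_pi' ?muln_gt0 ?cay_stab_astab1 ?cardG_gt0 //.
by rewrite coprimeMr coprimen2 oddC -cay_stab_astab1 coprime_sym.
Qed.

Lemma cay_stab_cent_rreg k : k \in cay_stab S -> k \in 'C(RC) -> k = 1.
Proof.
move=> Sk cRCk; have k1 : k 1 = 1 by move: Sk; rewrite inE => /andP[_ /eqP].
have kC : {in C, forall e, k e = e}.
  move=> e Ce; have /permP/(_ 1) := centP cRCk (rreg e) (mem_morphim _ (in_setT _) Ce).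
  by rewrite !permM !rregE k1 !mul1g.
have kC' u : u^-1 * k u \in C.
  have [Cu | notCu] := boolP (u \in C); first by rewrite kC ?mulVg.
  have notCku : k u \notin C.
    by apply: contra notCu => Cku; rewrite -(perm_inj (kC _ Cku)).
  exact: mulVg_notin.
have dvd_k_stab : #[k] %| #|cay_stab S|.
  by rewrite cay_stab_astab1 in Sk *; apply: order_dvdG.
have dvd_k_C : #[k] %| #|C| by rewrite order_dvdn (cent_rreg_expg_card cRCk kC').
apply/eqP; rewrite -order_eq1 -dvdn1 -(eqnP coprime_stab) dvdn_gcd.
by rewrite dvd_k_stab dvd_k_C.
Qed.

Lemma rregJ_conj_notin g w :
  RC :^ g = RC -> w \notin C -> {in RC, forall t, t ^ (rreg w ^ g) = t^-1}.
Proof.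
move=> nRCg notCw t; rewrite -{1}nRCg mem_conjg => /morphimP[e _ Ce te].
by rewrite -(conjgKV g t) -conjJg te rreg_conj_notin // conjVg.
Qed.

Lemma rregJ_id g : RG :^ g \subset A -> RC :^ g = RC -> RG :^ g = RG.
Proof.
move=> sRGgA nRCg; apply/eqP; rewrite eq_sym eqEcard cardJg leqnn andbT.
apply/subsetP=> _ /morphimP[v _ _ ->].
have sRC_RGg : RC \subset RG :^ g by rewrite -nRCg conjSg morphimS ?subsetT.
have [Cv | notCv] := boolP (v \in C); first by rewrite (subsetP sRC_RGg) ?mem_morphim ?inE.
pose w := (g^-1 1)^-1 * g^-1 v; pose t := rreg w ^ g.
have t1 : t 1 = v by rewrite /t /conjg !permM rregE mulKVg permKV.
have RGg_t : t \in RG :^ g by rewrite memJ_conjg mem_morphim ?inE.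
have notCw : w \notin C.
  apply: contra notCv => Cw; have : t \in RC by rewrite -nRCg memJ_conjg mem_morphim ?inE.
  by case/morphimP=> e _ Ce te; rewrite -t1 te rregE mul1g.
pose k := t * (rreg v)^-1.
have Sk : k \in cay_stab S.
  have Av : rreg v \in A by rewrite (subsetP (rreg_cay_aut S)) ?mem_morphim ?inE.
  have Ak : k \in A by rewrite /k groupM ?groupV // (subsetP sRGgA).
  rewrite inE Ak permM t1; apply/eqP/(canLR (permK (rreg v))).
  by rewrite rregE mul1g.
have cRCk : k \in 'C(RC).
  apply/centP=> _ /morphimP[e _ Ce ->]; apply/esym/commgP/conjg_fixP.
  rewrite conjgM (rregJ_conj_notin nRCg notCw) ?mem_morphim ?inE //.
  by rewrite conjVg -(morphV _ (in_setT v)) rreg_conj_notin ?groupV ?invgK.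
have /eqP := cay_stab_cent_rreg Sk cRCk; rewrite -eq_mulgV1 => /eqP tv.
by rewrite tv in RGg_t.
Qed.

Lemma rregJ_conj c : RG :^ c \subset A -> exists2 b, b \in A & RG :^ (c * b) = RG.
Proof.
move=> sRGcA; have sRC_RG : RC \subset RG := morphimS _ (subsetT C).
have oRC : #|RC| = #|C| by rewrite card_injm ?subsetT // ker_actperm astabR.
have hallRC := Hall_cay_aut (subset_trans sRC_RG (rreg_cay_aut S)) oRC.
have hallRCc : \pi(#|C|).-Hall(A) (RC :^ c).
  by apply: Hall_cay_aut; rewrite ?cardJg // (subset_trans _ sRGcA) ?conjSg.
have nilRC : nilpotent RC := abelian_nil (morphim_abelian _ abelC).
have nilRCc : nilpotent (RC :^ c) by rewrite -(isog_nil (conj_isog _ _)).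
have [b Ab defRCc] := nilpotent_Hall_trans nilRC nilRCc hallRC hallRCc.
exists b^-1; first by rewrite groupV.
apply: rregJ_id; rewrite conjsgM; last by rewrite defRCc conjsgK.
by rewrite -(conjGid (groupVr Ab)) conjSg.
Qed.

Theorem generalized_dihedral_CI_digraph : CI_digraph S.
Proof. exact: Babai_CI_digraph rregJ_conj. Qed.

End GeneralizedDihedral.

Lemma gen_sub_lmul_closed (gT : finGroupType) (S F : {set gT}) :
  1 \in F -> (forall s v, s \in S -> v \in F -> s * v \in F) -> <<S>> \subset F.
Proof.
move=> F1 mulSF; apply/subsetP=> _ /gen_prodgP[m [c Sc ->]].
elim: m c Sc => [|m IHm] c Sc; first by rewrite big_ord0.
by rewrite big_ord_recl mulSF ?IHm.
Qed.

Lemma cay_stab_prime_le (gT : finGroupType) (S : {set gT}) q :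
  cay_connected S -> prime q -> q %| #|cay_stab S| -> q <= #|S|.
Proof.
move=> connS q_pr; rewrite cay_stab_astab1 leqNgt => q_dvd; apply/negP=> ltSq.
have [k /setIP[Ak /astab1P k1] ok] := Cauchy q_pr q_dvd.
have qk : q.-group <[k]> by rewrite /pgroup -orderE ok pnat_id.
have fixS : <<S>> \subset [set v | k v == v].
  apply: gen_sub_lmul_closed => [|s v Ss]; first by rewrite inE -{2}k1.
  rewrite !inE => /eqP kv.
  have actSv : [acts <[k]>, on S :* v | 'P].
    rewrite cycle_subG; apply/astabsP=> w.
    by rewrite /= apermE !mem_rcoset; move: (cay_autP _ _ Ak v w); rewrite /cay_arc kv.
  have oFix := pgroup_fix_mod qk actSv.
  rewrite !modn_small ?card_rcoset // in oFix; last first.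
    by apply: leq_ltn_trans ltSq; rewrite -(card_rcoset S v) subset_leq_card ?subsetIl.
  have defFix : 'Fix_(S :* v | 'P)(<[k]>) = S :* v.
    by apply/eqP; rewrite eqEcard subsetIl card_rcoset oFix /=; apply: leqnn.
  have : s * v \in 'Fix_(S :* v | 'P)(<[k]>) by rewrite defFix mem_rcoset mulgK.
  by case/setIP=> _; rewrite afix_cycle => /afix1P; rewrite /= apermE => ->.
have k_1 : k = 1.
  apply/permP=> v; rewrite perm1; apply/eqP.
  by have := subsetP fixS v; rewrite connS !inE => /(_ isT).
by rewrite k_1 order1 in ok; rewrite -ok in q_pr.
Qed.

Lemma coprime_cay_stab (gT : finGroupType) (S : {set gT}) n :
  0 < n -> cay_connected S -> #|S| < pdiv n -> coprime #|cay_stab S| n.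
Proof.
move=> n_gt0 connS; apply: contraLR => not_cop; rewrite -leqNgt.
have gcd_gt1 : 1 < gcdn #|cay_stab S| n.
  by rewrite ltn_neqAle eq_sym not_cop gcdn_gt0 n_gt0 orbT.
have q_pr := pdiv_prime gcd_gt1; have := pdiv_dvd (gcdn #|cay_stab S| n).
rewrite dvdn_gcd => /andP[q_stab q_n].
by rewrite (leq_trans (pdiv_min_dvd (prime_gt1 q_pr) q_n)) ?cay_stab_prime_le.
Qed.

Lemma dihedral_cycle_index2 n : 1 < n ->
  exists C : {group 'D_(n.*2)},
    [/\ #|C| = n, #|[set: 'D_(n.*2)] : C| = 2, abelian C
      & {in C & [set: 'D_(n.*2)] :\: C, forall c z, c ^ z = c^-1}].
Proof.
move=> n_gt1; have oD : #|[set: 'D_(n.*2)]| = n.*2 by rewrite card_dihedral.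
case/existsP: (isoGrp_hom (Grp_dihedral n_gt1)) => -[x y] /eqP[defD xn y2 xy].
have defXY : <[x]> * <[y]> = [set: 'D_(n.*2)].
  by rewrite -norm_joinEr ?norms_cycle ?xy ?groupV ?cycle_id.
have ox_le : #[x] <= n by rewrite dvdn_leq ?(ltnW n_gt1) // order_dvdn xn.
have notXy : y \notin <[x]>.
  apply: contraTN ox_le => Xy; rewrite -ltnNge orderE -(mulGSid (_ : <[y]> \subset <[x]>)).
    by rewrite defXY oD -addnn -{1}[n]addn0 ltn_add2l ltnW.
  by rewrite cycle_subG.
have oy : #[y] = 2 := nt_prime_order (isT : prime 2) y2 (group1_contra notXy).
have oX : #|<[x]>| = n.
  have : #|<[x]> * <[y]>| = (#|<[x]>| * 2)%N.
    by rewrite TI_cardMg -?orderE ?oy // setIC prime_TIg ?cycle_subG // -orderE oy.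
  by rewrite defXY oD muln2 => /double_inj.
have indexX : #|[set: 'D_(n.*2)] : <[x]>| = 2.
  by rewrite -divgS ?subsetT // oD oX -muln2 mulKn ?(ltnW n_gt1).
exists <[x]>%G; split; rewrite ?cycle_abelian // => _ z /cycleP[i ->] Dz.
have : z \in <[x]> :* y by rewrite (rcoset_index2 (subsetT _) indexX) // !inE notXy.
case/rcosetP=> _ /cycleP[j ->] ->.
by rewrite conjgM {2}/conjg commuteX2 // mulKg conjXg xy expgVn.
Qed.

Local Close Scope group_scope.
Unset Implicit Arguments.

Theorem lemma4p2 (n : nat) (S : {set 'D_(n.*2)}) :
  1 < n -> odd n -> (1%g \notin S) ->
  (coprime #|cay_stab S| n -> CI_digraph S) /\
  (cay_connected S -> #|S| < pdiv n -> CI_digraph S).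
Proof.
move=> n_gt1 odd_n _; have [C [oC indexC abelC invC]] := dihedral_cycle_index2 n_gt1.
have CI_of_coprime : coprime #|cay_stab S| n -> CI_digraph S.
  move=> coprime_stab.
  by apply: (generalized_dihedral_CI_digraph indexC abelC _ invC); rewrite oC.
split=> // connS ltSp; apply: CI_of_coprime.
by rewrite coprime_cay_stab ?(ltnW n_gt1).
Qed.
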